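(* Let $\mathbb K\in\{\mathbb R,\mathbb C\}$ and fix a family of Taylor sheaves. Let $M_1,M_2,B\in\widehat{\mathcal V}$ be prevarieties and let $\varphi_1:M_1\to B$, $\varphi_2:M_2\to B$ be smooth maps. Then: (i) the diagonal $\Delta_B=\{(p,p)\mid p\in B\}$ is locally closed in $B\times B$ (with its $\widehat{\mathcal V}$-product structure); (ii) if $B$ is a locally closed subset of a finite-dimensional $\mathbb K$-linear space $V$ endowed with the structure induced from $(V,\mathcal F^V)$, then $\Delta_B$ is closed in $B\times B$; (iii) there exists a fibre product $\widehat{\mathcal V}$-structure on $M_1\times_B M_2$.
   Context: A space with a sheaf of $\mathbb K$-valued functions is a topological space $M$ together with, for each open $U\subset M$, a $\mathbb K$-algebra $\mathcal F(U)$ of functions $U\to\mathbb K$ (containing constants), closed under restriction to smaller open sets and such that a function that is locally in $\mathcal F$ is in $\mathcal F$. Germs, stalks $\mathcal F_p$ and the ideal $\mathfrak m_p$ of germs vanishing at $p$ are as usual; the sheaf is local if every germ not in $\mathfrak m_p$ is invertible in $\mathcal F_p$. A continuous map $\psi$ between such spaces is smooth if composing with $\psi$ sends local functions of the target sheaf to functions of the source sheaf. The induced structure on a subset $S\subset M$ is the subspace topology with the sheaf of functions locally equal to restrictions of functions in $\mathcal F$. Taylor sheaves: every finite-dimensional $\mathbb K$-linear space $V$ carries a topology and a local sheaf $\mathcal F^V$ such that (1) the topology is the weakest making all of $\mathcal F^V(V)$ continuous; (2) $V^*\subset\mathcal F^V(V)$; (3) for open $U\subset V$, a map $\psi:U\to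 W$ into a finite-dimensional space $W$ is smooth iff $\varphi\circ\psi\in\mathcal F^V(U)$ for all $\varphi\in W^*$; (4) for $p\in V$ the map $V^*\to\mathfrak m_p/\mathfrak m_p^2$, $\varphi\mapsto(\varphi-\varphi(p))_p$, is an isomorphism (giving for $f\in\mathcal F^V(U)$ a unique $df_p\in V^*$ with $f_p-f(p)-(df_p-df_p(p))_p\in\mathfrak m_p^2$); (5) for $f\in\mathcal F^V(U)$, $(p,v)\mapsto df_p(v)$ lies in $\mathcal F^{V\oplus V}(U\times V)$. A prevariety is a space with a sheaf that has a countable or finite open cover by pieces each isomorphic to a locally closed subset of a finite-dimensional $\mathbb K$-linear space $V$ with the structure induced from $\mathcal F^V$; $\widehat{\mathcal V}$ is the class of prevarieties. A $\widehat{\mathcal V}$-product structure on $M_1\times M_2$ (for $M_1,M_2\in\widehat{\mathcal V}$) is a prevariety structure with smooth projections such that for every $M\in\widehat{\mathcal V}$ and smooth $\psi_i:M\to M_i$ the map $(\psi_1,\psi_2):M\to M_1\times M_2$ is smooth (such a structure exists and is unique). Given smooth $\varphi_i:M_i\to B$ ($i=1,2$), set $M_1\times_BM_2=\{(p_1,p_2)\in M_1\times M_2\mid \varphi_1(p_1)=\varphi_2(p_2)\}$ with projections $\pi_i$. A fibre product $\widehat{\mathcal V}$-structure on $M_1\times_BM_2$ is a prevariety structure such that $\pi_1,\pi_2$ are smooth and, for every $M\in\widehat{\mathcal V}$ and smooth maps $\psi_i:M\to M_i$ with $\varphi_1\circ\psi_1=\varphi_2\circ\psi_2$, the map $(\psi_1,\psi_2):M\to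 M_1\times_BM_2$ is smooth. *)

From mathcomp Require Import all_boot all_algebra.
From mathcomp Require Import all_classical all_reals all_analysis.
From mathcomp Require Import complex.
Import GRing.Theory Num.Theory.
Import numFieldNormedType.Exports.

Set Implicit Arguments.
Unset Strict Implicit.
Unset Printing Implicit Defensive.

Local Open Scope ring_scope.
Local Open Scope classical_set_scope.

(* K carries its standard (norm) topology,
   through mathcomp-analysis' [open] on a numFieldType. *)
Definition Kfield (R : realType) (b : bool) : numFieldType :=
  if b then (R : numFieldType) else (R[i] : numFieldType).

Section Spaces.
Variable K : numFieldType.

(* A (raw) kspace with K-valued functions: a carrier, a family of open sets and,
   for each set U, the functions "U -> K" in F(U), represented as total
   functions car -> K (only their values on U matter, see [is_sheaf]). *)
Record kspace := Space {
  car : Type;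
  opn : set (set car);
  fns : set car -> set (car -> K) }.
Arguments car : clear implicits.
Arguments opn : clear implicits.
Arguments fns : clear implicits.

Definition is_topology (T : Type) (o : set (set T)) : Prop :=
  o setT /\
  (forall S : set (set T), S `<=` o -> o (\bigcup_(A in S) A)) /\
  (forall A B, o A -> o B -> o (A `&` B)).

Definition is_sheaf (X : kspace) : Prop :=
  is_topology (opn X) /\
  forall U, opn X U ->
    (* F(U) is a set of functions U -> K *)
    (forall f g, fns X U f -> (forall x, U x -> f x = g x) -> fns X U g) /\
    (forall c : K, fns X U (fun _ => c)) /\
    (forall f g, fns X U f -> fns X U g ->
       fns X U (fun x => f x + g x) /\ fns X U (fun x => f x * g x)) /\
    (forall (c : K) f, fns X U f -> fns X U (fun x => c * f x)) /\
    (forall U', opn X U' -> U' `<=` U -> forall f, fns X U f -> fns X U' f) /\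
    (forall f, (forall p, U p -> exists W, opn X W /\ W p /\ W `<=` U /\ fns X W f) ->
       fns X U f).

Definition is_local (X : kspace) : Prop :=
  forall U f p, opn X U -> fns X U f -> U p -> f p != 0 ->
    exists W g, [/\ opn X W, W p, W `<=` U, fns X W g &
                    forall x, W x -> f x * g x = 1].

Definition in_mp2 (X : kspace) (p : car X) (f : car X -> K) : Prop :=
  exists (W : set (car X)) (n : nat) (g h : 'I_n -> car X -> K),
    [/\ opn X W, W p,
        (forall i, [/\ fns X W (g i), fns X W (h i), g i p = 0 & h i p = 0]) &
        forall x, W x -> f x = \sum_(i < n) g i x * h i x].
Arguments in_mp2 : clear implicits.

Definition cont_into (T : Type) (o : set (set T)) (f : T -> K) : Prop :=
  forall O : set K, open O -> o (f @^-1` O).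

Definition smooth (X Y : kspace) (psi : car X -> car Y) : Prop :=
  (forall O, opn Y O -> opn X (psi @^-1` O)) /\
  (forall O g, opn Y O -> fns Y O g -> fns X (psi @^-1` O) (fun x => g (psi x))).
Arguments smooth : clear implicits.

Definition iso (X Y : kspace) : Prop :=
  exists (h : car X -> car Y) (g : car Y -> car X),
    [/\ smooth X Y h, smooth Y X g, cancel h g & cancel g h].

Definition induced_on (X : kspace) (S : set (car X)) : kspace :=
  @Space (sig S)
    (fun A => exists O, opn X O /\ A = (fun x => O (proj1_sig x)))
    (fun U g => forall p, U p ->
       exists O f, [/\ opn X O, O (proj1_sig p), fns X O f &
                       forall x, U x -> O (proj1_sig x) -> g x = f (proj1_sig x)]).
Arguments induced_on : clear implicits.

Definition closed_in (T : Type) (o : set (set T)) (A : set T) : Prop := o (~` A).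

Definition locally_closed (T : Type) (o : set (set T)) (A : set T) : Prop :=
  exists O C, [/\ o O, closed_in o C & A = O `&` C].

Definition lin_fun (V : vectType K) (phi : V -> K) : Prop :=
  forall (a : K) (u v : V), phi (a *: u + v) = a * phi u + phi v.

Record taylor := Taylor {
  t_opn : forall V : vectType K, set (set V);
  t_fns : forall V : vectType K, set V -> set (V -> K) }.
Arguments t_opn : clear implicits.
Arguments t_fns : clear implicits.

Definition tspace (T : taylor) (V : vectType K) : kspace :=
  @Space V (t_opn T V) (t_fns T V).

Definition is_taylor (T : taylor) : Prop :=
  forall V : vectType K,
  let X := tspace T V in
  [/\ is_sheaf X /\ is_local X,
   (* (1) weakest topology making all of F^V(V) continuous *)
   (forall f, fns X setT f -> cont_into (opn X) f) /\
   (forall tau : set (set V), is_topology tau ->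
      (forall f, fns X setT f -> cont_into tau f) -> opn X `<=` tau),
   (forall phi : V -> K, lin_fun phi -> fns X setT phi),
   (forall (W : vectType K) (U : set V) (psi : V -> W), opn X U ->
      (smooth (induced_on X U) (tspace T W) (fun x => psi (proj1_sig x)) <->
       forall phi : W -> K, lin_fun phi -> fns X U (fun x => phi (psi x)))) &
   (* (4) V^* -> m_p / m_p^2 is an isomorphism *)
   (forall p : V,
      (forall phi : V -> K, lin_fun phi ->
         in_mp2 X p (fun x => phi x - phi p) -> forall v, phi v = 0) /\
      (forall U f, opn X U -> U p -> fns X U f -> f p = 0 ->
         exists phi : V -> K, lin_fun phi /\
           in_mp2 X p (fun x => f x - (phi x - phi p))))
   /\
   (* (5) (p, v) |-> df_p(v) lies in F^{V (+) V}(U x V); here D(p, .) = df_p is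
      the unique element of V^* with f_p - f(p) - (df_p - df_p(p))_p in m_p^2 *)
   (forall U f, opn X U -> fns X U f ->
      exists D : (V * V)%type -> K,
        fns (tspace T (V * V)%type) (U `*` setT) D /\
        forall p, U p -> lin_fun (fun v => D (p, v)) /\
          in_mp2 X p (fun x => f x - f p - (D (p, x) - D (p, p))))].

(* prevarieties: countable-or-finite open cover by pieces isomorphic to
   locally closed subsets of finite-dimensional spaces *)
Definition prevariety (T : taylor) (X : kspace) : Prop :=
  is_sheaf X /\
  exists (I : Type) (enc : I -> nat) (U : I -> set (car X)),
    [/\ injective enc, (forall i, opn X (U i)), \bigcup_i U i = setT &
        forall i, exists (V : vectType K) (L : set V),
          locally_closed (t_opn T V) L /\ iso (induced_on X (U i)) (induced_on (tspace T V) L)].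

Definition is_product (T : taylor) (M1 M2 : kspace)
    (o : set (set (car M1 * car M2))) (f : set (car M1 * car M2) -> set (car M1 * car M2 -> K)) : Prop :=
  let P := @Space (car M1 * car M2)%type o f in
  [/\ prevariety T P, smooth P M1 fst, smooth P M2 snd &
      forall M : kspace, prevariety T M ->
        forall (psi1 : car M -> car M1) (psi2 : car M -> car M2),
        smooth M M1 psi1 -> smooth M M2 psi2 ->
        smooth M P (fun x => (psi1 x, psi2 x))].
Arguments is_product : clear implicits.

Definition fib_car (M1 M2 B : kspace) (phi1 : car M1 -> car B) (phi2 : car M2 -> car B) : Type :=
  {x : (car M1 * car M2)%type | phi1 x.1 = phi2 x.2}.

Definition is_fibre_product (T : taylor) (M1 M2 B : kspace)
    (phi1 : car M1 -> car B) (phi2 : car M2 -> car B)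
    (o : set (set (fib_car phi1 phi2))) (f : set (fib_car phi1 phi2) -> set (fib_car phi1 phi2 -> K)) : Prop :=
  let P := @Space (fib_car phi1 phi2) o f in
  [/\ prevariety T P, smooth P M1 (fun x => (proj1_sig x).1), smooth P M2 (fun x => (proj1_sig x).2) &
      forall M : kspace, prevariety T M ->
        forall (psi1 : car M -> car M1) (psi2 : car M -> car M2)
               (H : forall x, phi1 (psi1 x) = phi2 (psi2 x)),
        smooth M M1 psi1 -> smooth M M2 psi2 ->
        smooth M P (fun x => exist (fun y : (car M1 * car M2)%type => phi1 y.1 = phi2 y.2)
                                   (psi1 x, psi2 x) (H x))].

End Spaces.
Arguments car {K} k.
Arguments opn {K} k _.
Arguments fns {K} k _ _.
Arguments Space {K} car opn fns.
Arguments is_topology {T} o.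
Arguments is_sheaf {K} X.
Arguments is_local {K} X.
Arguments in_mp2 {K} X p f.
Arguments cont_into {K T} o f.
Arguments smooth {K} X Y psi.
Arguments iso {K} X Y.
Arguments induced_on {K} X S.
Arguments closed_in {T} o A.
Arguments locally_closed {T} o A.
Arguments lin_fun {K V} phi.
Arguments t_opn {K} t V _.
Arguments t_fns {K} t V _ _.
Arguments tspace {K} T V.
Arguments is_taylor {K} T.
Arguments prevariety {K} T X.
Arguments is_product {K} T M1 M2 o f.
Arguments fib_car {K M1 M2 B} phi1 phi2.
Arguments is_fibre_product {K} T {M1 M2 B} phi1 phi2 o f.

Definition diagK (T : Type) : set (T * T) := [set x | x.1 = x.2].
Arguments diagK T : clear implicits.

(* Everything is local on charts, i.e. on locally closed subsets of linear spaces, where the linear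
   coordinates do the work: a map into a linear space is smooth as soon as its coordinates are
   local functions, and the non-vanishing locus of a local function is open.

   (i), (ii): two points in one chart domain differ iff some chart coordinate separates them, so
   the pairs of distinct points of a common chart domain form an open set; the diagonal is closed
   in the open union of the squares of the chart domains (in all of B x B when B is linear).

   (iii): equip M1 x_B M2 with the final structure for all pairs of smooth maps that agree over B,
   which makes the universal property automatic. Given charts of M1, M2 and B, the pairs lying over
   the chart of B correspond, through the charts of M1 and M2, to the subset of L1 x L2 where the
   two images in B lie in the chart of B and agree, which is locally closed by the argument of (i);
   this correspondence and its inverse are smooth by the coordinate criterion and by the universal
   property. *)

From Pilot Require Import Defs.
From mathcomp Require Import all_boot all_algebra.
From mathcomp Require Import all_classical all_reals all_analysis.
From mathcomp Require Import complex.
Import GRing.Theory Num.Theory.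
Import numFieldNormedType.Exports.

Set Implicit Arguments.
Unset Strict Implicit.
Unset Printing Implicit Defensive.

Local Open Scope ring_scope.
Local Open Scope classical_set_scope.

Lemma sval_inj (T : Type) (P : T -> Prop) : injective (@proj1_sig T P).
Proof. by move=> x y; apply: eq_sig_hprop => z p q; exact: Prop_irrelevance. Qed.

Definition extend (T U : Type) (S : set T) (d : U) (h : sig S -> U) : T -> U :=
  fun x => if pselect (S x) is left Sx then h (exist S x Sx) else d.

Lemma extendE (T U : Type) (S : set T) (d : U) (h : sig S -> U) x (Sx : S x) :
  extend d h x = h (exist S x Sx).
Proof. by rewrite /extend; case: pselect => [Sx'|//]; congr h; exact: sval_inj. Qed.

Section Topology.
Variables (T : Type) (o : set (set T)) (ho : is_topology o).

Lemma topo_openT : o setT. Proof. by case: ho. Qed.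

Lemma topo_openI A B : o A -> o B -> o (A `&` B).
Proof. by case: ho => _ [_]; apply. Qed.

Lemma topo_bigcup_open (S : set (set T)) : S `<=` o -> o (\bigcup_(A in S) A).
Proof. by case: ho => _ [+ _]; apply. Qed.

Lemma topo_open_nbhs (A : set T) :
  (forall x, A x -> exists W, [/\ o W, W x & W `<=` A]) -> o A.
Proof.
move=> nbhsA.
suff -> : A = \bigcup_(W in [set W | o W /\ W `<=` A]) W.
  by apply: topo_bigcup_open => W [].
apply/seteqP; split=> [x /nbhsA [W [oW Wx WA]]|x [W [_ WA] /WA//]].
by exists W.
Qed.

Lemma topo_bigcup_open_in (I : Type) (P : set I) (F : I -> set T) :
  (forall i, P i -> o (F i)) -> o (\bigcup_(i in P) F i).
Proof.
move=> oF; apply: topo_open_nbhs => x [i Pi Fix].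
by exists (F i); split=> [|//|y Fiy]; [exact: oF|exists i].
Qed.

Lemma topo_openU A B : o A -> o B -> o (A `|` B).
Proof.
move=> oA oB; rewrite -bigcup2inE; apply: topo_bigcup_open_in => -[|[|]] //= _.
Qed.

Lemma topo_bigcap_open (I : finType) (F : I -> set T) :
  (forall i, o (F i)) -> o (\bigcap_i F i).
Proof.
move=> oF.
suff opn_seq : forall s : seq I, o [set x | forall i, i \in s -> F i x].
  congr o: (opn_seq (enum I)); apply/seteqP; split=> x Fx i; last by move=> _; exact: Fx.
  by move=> _; apply: Fx; rewrite mem_enum.
elim=> [|i s IHs].
  by congr o: topo_openT; apply/seteqP; split.
congr o: (topo_openI (oF i) IHs); apply/seteqP; split=> x.
  by move=> [Fix Fsx] j; rewrite inE => /orP[/eqP->|/Fsx].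
by move=> Fx; split=> [|j js]; apply: Fx; rewrite inE ?eqxx ?js ?orbT.
Qed.

Lemma locally_closed_setID (Y OQ OE : set T) :
  locally_closed o Y -> o OQ -> o OE -> locally_closed o (Y `&` OQ `&` ~` OE).
Proof.
move=> [ OY [CY [oOY cCY ->]]] oOQ oOE; exists (OY `&` OQ), (CY `&` ~` OE); split.
- exact: topo_openI.
- by rewrite /closed_in setCI setCK; exact: topo_openU.
- by apply/seteqP; split=> x; [move=> [[[? ?] ?] ?]|move=> [[? ?] [? ?]]].
Qed.

End Topology.

Section Sheaf.
Variables (K : numFieldType) (X : kspace K) (hX : is_sheaf X).

Lemma sheaf_topology : is_topology (opn X). Proof. by case: hX. Qed.

Lemma fns_ext U f g : opn X U -> fns X U f -> (forall x, U x -> f x = g x) -> fns X U g.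
Proof. by move=> oU; case: hX => _ /(_ U oU) [+ _]; apply. Qed.

Lemma fns_cst U (c : K) : opn X U -> fns X U (fun=> c).
Proof. by move=> oU; case: hX => _ /(_ U oU) [_ []]. Qed.

Lemma fnsD U f g : opn X U -> fns X U f -> fns X U g -> fns X U (fun x => f x + g x).
Proof. by move=> oU; case: hX => _ /(_ U oU) [_ [_ [+ _]]] ff fg => /(_ _ _ ff fg) []. Qed.

Lemma fnsM U f g : opn X U -> fns X U f -> fns X U g -> fns X U (fun x => f x * g x).
Proof. by move=> oU; case: hX => _ /(_ U oU) [_ [_ [+ _]]] ff fg => /(_ _ _ ff fg) []. Qed.

Lemma fnsZ U (c : K) f : opn X U -> fns X U f -> fns X U (fun x => c * f x).
Proof. by move=> oU; case: hX => _ /(_ U oU) [_ [_ [_ [+ _]]]]; apply. Qed.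

Lemma fns_restr U U' f : opn X U -> opn X U' -> U' `<=` U -> fns X U f -> fns X U' f.
Proof. by move=> oU oU' U'U; case: hX => _ /(_ U oU) [_ [_ [_ [_ [+ _]]]]]; apply. Qed.

Lemma fns_glue U f : opn X U ->
  (forall p, U p -> exists W, [/\ opn X W, W p, W `<=` U & fns X W f]) -> fns X U f.
Proof.
move=> oU loc; case: hX => _ /(_ U oU) [_ [_ [_ [_ [_]]]]]; apply=> p /loc[W [*]].
by exists W.
Qed.

Lemma fnsB U f g : opn X U -> fns X U f -> fns X U g -> fns X U (fun x => f x - g x).
Proof.
move=> oU ff fg; apply: (fnsD oU ff); apply: (fns_ext oU (fnsZ (-1) oU fg)) => x _.
by rewrite mulN1r.
Qed.

Lemma fns_sum U n (G : 'I_n -> car X -> K) : opn X U -> (forall i, fns X U (G i)) ->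
  fns X U (fun x => \sum_(i < n) G i x).
Proof.
move=> oU; elim: n G => [|n IHn] G fG.
  by apply: (fns_ext oU (fns_cst 0 oU)) => x _; rewrite big_ord0.
apply: (fns_ext oU (fnsD oU (IHn _ (fun i => fG (widen_ord (leqnSn n) i))) (fG ord_max))).
by move=> x _; rewrite big_ord_recr.
Qed.

End Sheaf.

Lemma fns_congr (K : numFieldType) (X : kspace K) U U' f f' :
  U = U' -> f =1 f' -> fns X U f -> fns X U' f'.
Proof. by move=> <- /funext <-. Qed.

Section Induced.
Variable K : numFieldType.
Implicit Types X Y Z : kspace K.

Lemma induced_open X (S : set (car X)) O : opn X O ->
  opn (induced_on X S) (fun x => O (proj1_sig x)).
Proof. by move=> oO; exists O. Qed.

Lemma induced_fns X (S : set (car X)) O f : opn X O -> fns X O f ->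
  fns (induced_on X S) (fun x => O (proj1_sig x)) (fun x => f (proj1_sig x)).
Proof. by move=> oO fOf p Op; exists O, f. Qed.

Lemma induced_topology X (S : set (car X)) :
  is_topology (opn X) -> is_topology (opn (induced_on X S)).
Proof.
move=> tX; split; first by exists setT; split=> //; exact: topo_openT.
split=> [F sF|_ _ [ OA [oA ->]] [ OB [oB ->]]]; last first.
  by exists (OA `&` OB); split=> //; exact: topo_openI.
pose G := [set O | opn X O /\ exists2 A, F A & A = (fun x => O (proj1_sig x))].
exists (\bigcup_(O in G) O); split; first by apply: topo_bigcup_open => // O [].
apply/seteqP; split=> x /=.
  move=> [A FA Ax]; have [ O [oO eA]] := sF A FA.
  by exists O; [split=> //; exists A | rewrite eA in Ax].
by move=> [ O [oO [A FA eA]] Ox]; exists A => //; rewrite eA.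
Qed.

Lemma induced_sheaf X (S : set (car X)) : is_sheaf X -> is_sheaf (induced_on X S).
Proof.
move=> hX; have tX := sheaf_topology hX.
have restrI O1 O2 f : opn X O1 -> opn X O2 -> fns X O1 f -> fns X (O1 `&` O2) f.
  by move=> oO1 oO2; apply: fns_restr (topo_openI tX oO1 oO2) _ => // x [].
have binop (h : K -> K -> K) :
    (forall O f1 f2, opn X O -> fns X O f1 -> fns X O f2 -> fns X O (fun x => h (f1 x) (f2 x))) ->
    forall U f1 f2, fns (induced_on X S) U f1 -> fns (induced_on X S) U f2 ->
    fns (induced_on X S) U (fun x => h (f1 x) (f2 x)).
  move=> hh U f1 f2 ff1 ff2 p Up.
  have [ O1 [g1 [oO1 O1p fg1 e1]]] := ff1 p Up.
  have [ O2 [g2 [oO2 O2p fg2 e2]]] := ff2 p Up.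
  have oO12 := topo_openI tX oO1 oO2.
  exists (O1 `&` O2), (fun x => h (g1 x) (g2 x)); split=> //.
    by apply: hh => //; [exact: restrI|rewrite setIC; exact: restrI].
  by move=> x Ux [ O1x O2x]; rewrite e1 // e2.
split; first exact: induced_topology.
move=> _ [ OU [oOU ->]]; split.
  move=> f g ff efg p Up; have [ O [f' [oO Op ff' e]]] := ff p Up.
  by exists O, f'; split=> // x Ux Ox; rewrite -efg // e.
split.
  move=> c p _; exists setT, (fun=> c).
  by split=> //; [exact: topo_openT|exact: fns_cst (topo_openT tX)].
split.
  by move=> f g ff fg; split; apply: binop => // O f1 f2; [exact: fnsD|exact: fnsM].
split.
  move=> c f ff p Up; have [ O [f' [oO Op ff' e]]] := ff p Up.
  by exists O, (fun x => c * f' x); split=> [||| x Ux Ox]; rewrite ?e //; exact: fnsZ.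
split.
  move=> U' _ U'U f ff p U'p; have [ O [f' [oO Op ff' e]]] := ff p (U'U p U'p).
  by exists O, f'; split=> // x /U'U; apply: e.
move=> f loc p Up; have [W [[ OW [oOW eW]] [Wp [WU fWf]]]] := loc p Up.
have [ O [f' [oO Op ff' e]]] := fWf p Wp.
exists (O `&` OW), f'; split; [exact: topo_openI|by rewrite eW in Wp|exact: restrI|].
by move=> x Ux [ Ox OWx]; apply: e; rewrite // eW.
Qed.

Lemma smooth_id X : smooth X X id.
Proof. by []. Qed.

Lemma smooth_comp X Y Z (p : car X -> car Y) (q : car Y -> car Z) :
  smooth X Y p -> smooth Y Z q -> smooth X Z (fun x => q (p x)).
Proof.
move=> [p_open p_fns] [q_open q_fns]; split=> [ O oO| O g oO fg]; first exact: p_open (q_open _ oO).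
exact: (p_fns _ (fun y => g (q y)) (q_open _ oO) (q_fns _ _ oO fg)).
Qed.

Lemma smooth_restr X Y (S : set (car X)) (p : car X -> car Y) :
  smooth X Y p -> smooth (induced_on X S) Y (fun x => p (proj1_sig x)).
Proof.
move=> [p_open p_fns]; split=> [ O oO| O g oO fg]; first exact: induced_open (p_open _ oO).
exact: induced_fns (p_open _ oO) (p_fns _ _ oO fg).
Qed.

Lemma smooth_val X (S : set (car X)) : smooth (induced_on X S) X (@proj1_sig _ S).
Proof. exact: smooth_restr (smooth_id X). Qed.

Lemma fns_of_induced X (S U : set (car X)) (k : car X -> K) :
  is_sheaf X -> opn X U -> U `<=` S ->
  fns (induced_on X S) (fun x => U (proj1_sig x)) (fun x => k (proj1_sig x)) ->
  fns X U k.
Proof.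
move=> hX oU US fk; have tX := sheaf_topology hX.
apply: fns_glue => // x Ux.
have [ O [f [oO Ox ff e]]] := fk (exist S x (US x Ux)) Ux.
have oUO := topo_openI tX oU oO.
exists (U `&` O); split; [exact: oUO|by []|by move=> y []|].
apply: (fns_ext hX oUO (fns_restr hX oO oUO _ ff)); first by move=> y [].
by move=> y [Uy Oy]; rewrite (e (exist S y (US y Uy))).
Qed.

Lemma smooth_corestr X Y (S : set (car Y)) (p : car X -> car Y) (pS : forall x, S (p x)) :
  is_sheaf X -> smooth X Y p -> smooth X (induced_on Y S) (fun x => exist S (p x) (pS x)).
Proof.
move=> hX [p_open p_fns]; have tX := sheaf_topology hX.
split=> [_ [ O [oO ->]]|_ g [ O [oO ->]] fg]; first exact: p_open.
apply: fns_glue => //; first exact: p_open.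
move=> x Ox; have [ O' [f' [oO' O'x ff' e]]] := fg (exist S (p x) (pS x)) Ox.
have oW := topo_openI tX (p_open _ oO) (p_open _ oO').
exists (p @^-1` (O `&` O')); split; [exact: oW|by []|by move=> y []|].
apply: (fns_ext hX oW (fns_restr hX (p_open _ oO') oW _ (p_fns _ _ oO' ff'))).
  by move=> y [].
by move=> y [ Oy O'y]; rewrite e.
Qed.

Lemma smooth_of_induced_setT X Y (p : car X -> car Y) :
  is_sheaf X -> smooth (induced_on X setT) Y (fun x => p (proj1_sig x)) -> smooth X Y p.
Proof.
move=> hX [p_open p_fns].
have pre_open O : opn Y O -> opn X (p @^-1` O).
  move=> /p_open[ O' [oO' e]]; congr (opn X): oO'.
  by apply/esym/funext => x; exact: (congr1 (fun P => P (exist setT x I)) e).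
split=> // O g oO fg; apply: (@fns_of_induced _ setT) (pre_open _ oO) _ _ => //.
exact: (p_fns _ _ oO fg).
Qed.

End Induced.

Section Linear.
Variables (K : numFieldType) (V : vectType K) (phi : V -> K) (hphi : lin_fun phi).

Lemma lin_fun0 : phi 0 = 0.
Proof.
have := hphi 1 0 0; rewrite scaler0 addr0 mul1r => e.
by apply: (@addrI _ (phi 0)); rewrite addr0 -e.
Qed.

Lemma lin_funD u v : phi (u + v) = phi u + phi v.
Proof. by rewrite -[u]scale1r hphi mul1r scale1r. Qed.

Lemma lin_funZ a u : phi (a *: u) = a * phi u.
Proof. by rewrite -[a *: u]addr0 hphi lin_fun0 addr0. Qed.

Lemma lin_fun_sum n (a : 'I_n -> K) (w : 'I_n -> V) :
  phi (\sum_(i < n) a i *: w i) = \sum_(i < n) a i * phi (w i).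
Proof.
elim: n a w => [|n IHn] a w; first by rewrite !big_ord0 lin_fun0.
by rewrite !big_ord_recr /= lin_funD lin_funZ IHn.
Qed.

End Linear.

Section Coordinates.
Variables (K : numFieldType) (V : vectType K).

Definition coordv (i : 'I_(\dim {:V})) : V -> K := coord (vbasis {:V}) i.

Lemma coordv_lin i : lin_fun (coordv i).
Proof. by move=> a u v; rewrite /coordv linearP. Qed.

Lemma coordv_expand (v : V) : v = \sum_i coordv i v *: (vbasis {:V})`_i.
Proof. exact: coord_vbasis (memvf v). Qed.

Lemma coordv_separates (u v : V) : u <> v -> exists i, coordv i u - coordv i v != 0.
Proof.
move=> neq_uv; apply: contrapT => all_eq; apply: neq_uv.
rewrite [u]coordv_expand [v]coordv_expand; apply: eq_bigr => i _; congr (_ *: _).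
by apply/eqP; rewrite -subr_eq0; apply: contrapT => /negP ne0; apply: all_eq; exists i.
Qed.

End Coordinates.

Lemma lin_fun_pair (K : numFieldType) (V1 V2 : vectType K) (chi : V1 * V2 -> K) : lin_fun chi ->
  [/\ lin_fun (fun a => chi (a, 0)), lin_fun (fun b => chi (0, b)) &
      forall a b, chi (a, b) = chi (a, 0) + chi (0, b)].
Proof.
move=> lin_chi; split=> [c u v|c u v|a b]; rewrite -?lin_chi -?(lin_funD lin_chi); congr chi.
- by apply/eqP; rewrite xpair_eqE /= scaler0 addr0 !eqxx.
- by apply/eqP; rewrite xpair_eqE /= scaler0 addr0 !eqxx.
- by apply/eqP; rewrite xpair_eqE /= addr0 add0r !eqxx.
Qed.

Section Taylor.
Variables (K : numFieldType) (T : taylor K) (hT : is_taylor T).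

Lemma taylor_sheaf (V : vectType K) : is_sheaf (tspace T V).
Proof. by have /= [[]] := hT V. Qed.

Lemma taylor_topology (V : vectType K) : is_topology (opn (tspace T V)).
Proof. exact: sheaf_topology (taylor_sheaf V). Qed.

Lemma taylor_lin_fns (V : vectType K) (phi : V -> K) : lin_fun phi -> fns (tspace T V) setT phi.
Proof. by have /= [_ _ + _ _] := hT V; apply. Qed.

Lemma taylor_open_lin_preimage (V : vectType K) (phi : V -> K) (O : set K) :
  lin_fun phi -> open O -> opn (tspace T V) (phi @^-1` O).
Proof.
have /= [_ [cont _] _ _ _] := hT V.
by move=> /taylor_lin_fns /cont; apply.
Qed.

Lemma taylor_smooth_on (V W : vectType K) (U : set V) (psi : V -> W) : opn (tspace T V) U ->
  (forall phi : W -> K, lin_fun phi -> fns (tspace T V) U (fun x => phi (psi x))) ->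
  smooth (induced_on (tspace T V) U) (tspace T W) (fun x => psi (proj1_sig x)).
Proof. by have /= [_ _ _ crit _] := hT V => oU; move/(crit W U psi oU). Qed.

Lemma smooth_of_lin (V W : vectType K) (p : V -> W) :
  (forall chi : W -> K, lin_fun chi -> lin_fun (fun v => chi (p v))) ->
  smooth (tspace T V) (tspace T W) p.
Proof.
move=> lin_p; apply: smooth_of_induced_setT; first exact: taylor_sheaf.
apply: taylor_smooth_on; first exact: topo_openT (taylor_topology V).
by move=> chi /lin_p; exact: taylor_lin_fns.
Qed.

Lemma smooth_fst (V1 V2 : vectType K) : smooth (tspace T (V1 * V2)%type) (tspace T V1) fst.
Proof. by apply: smooth_of_lin => chi hchi a u v; apply: hchi. Qed.

Lemma smooth_snd (V1 V2 : vectType K) : smooth (tspace T (V1 * V2)%type) (tspace T V2) snd.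
Proof. by apply: smooth_of_lin => chi hchi a u v; apply: hchi. Qed.

Section Chart.
Variables (M : kspace K) (hM : is_sheaf M) (Ua : set (car M)) (oUa : opn M Ua)
  (V : vectType K) (L : set V) (h : sig Ua -> sig L).
Hypothesis smooth_h : smooth (induced_on M Ua) (induced_on (tspace T V) L) h.

Definition chartf : car M -> V := extend 0 (fun y => proj1_sig (h y)).

Lemma chartfE y (Uay : Ua y) : chartf y = proj1_sig (h (exist Ua y Uay)).
Proof. exact: extendE. Qed.

Lemma chartf_in y : Ua y -> L (chartf y).
Proof. by move=> Uay; rewrite (chartfE Uay); exact: proj2_sig. Qed.

Lemma chartf_inj y1 y2 : injective h -> Ua y1 -> Ua y2 -> chartf y1 = chartf y2 -> y1 = y2.
Proof.
move=> inj_h Uy1 Uy2; rewrite (chartfE Uy1) (chartfE Uy2) => /sval_inj /inj_h.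
by move/(congr1 (@proj1_sig _ _)).
Qed.

Lemma chart_open_preimage O : opn (tspace T V) O -> opn M (Ua `&` chartf @^-1` O).
Proof.
move=> oO; have [ O' [oO' e]] := smooth_h.1 _ (@induced_open K (tspace T V) L O oO).
suff -> : Ua `&` chartf @^-1` O = Ua `&` O' by apply: topo_openI => //; exact: sheaf_topology.
apply/seteqP; split=> y [Uay]; have := congr1 (fun P => P (exist Ua y Uay)) e;
  rewrite /preimage /= (chartfE Uay) => ey Oy; split=> //; by [rewrite -ey | rewrite ey].
Qed.

Lemma chart_fns_pullback O F : opn (tspace T V) O -> fns (tspace T V) O F ->
  fns M (Ua `&` chartf @^-1` O) (fun y => F (chartf y)).
Proof.
move=> oO fF.
have := smooth_h.2 _ _ (@induced_open K (tspace T V) L O oO)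
  (@induced_fns K (tspace T V) L O F oO fF).
move=> fFh; apply: (@fns_of_induced _ M Ua _ _ hM (chart_open_preimage oO)); first by move=> y [].
apply: fns_congr fFh.
  by apply/funext => -[y Uay]; apply/propext; rewrite /preimage /= (chartfE Uay); split=> [|[]].
by move=> [y Uay]; rewrite /= (chartfE Uay).
Qed.

Lemma chart_lin_fns (phi : V -> K) : lin_fun phi -> fns M Ua (fun y => phi (chartf y)).
Proof.
move=> /(taylor_lin_fns (V:=V)) /(chart_fns_pullback (topo_openT (taylor_topology V))).
by apply: fns_congr => //; apply/seteqP; split=> y // [].
Qed.

End Chart.

End Taylor.

Section Prevariety.
Variables (K : numFieldType) (T : taylor K) (hT : is_taylor T).

Lemma prevariety_sheaf (M : kspace K) : prevariety T M -> is_sheaf M.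
Proof. by case. Qed.

Lemma prevariety_chart (M : kspace K) (hM : prevariety T M) m :
  exists (Ua : set (car M)) (V : vectType K) (L : set V)
         (h : sig Ua -> sig L) (g : sig L -> sig Ua),
  [/\ opn M Ua, Ua m, locally_closed (t_opn T V) L,
      smooth (induced_on M Ua) (induced_on (tspace T V) L) h &
      smooth (induced_on (tspace T V) L) (induced_on M Ua) g] /\ (cancel h g /\ cancel g h).
Proof.
case: hM => _ [I [_ [U [_ oU covU chartU]]]].
have [i _ Uim] : (\bigcup_i U i) m by rewrite covU.
have [V [L [lcL [h [g [sh sg hK gK]]]]]] := chartU i.
by exists (U i), V, L, h, g.
Qed.

Lemma chart_local_extension (M : kspace K) (Ua U : set (car M)) (V : vectType K) (L : set V)
    (h : sig Ua -> sig L) (g : sig L -> sig Ua) f m :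
  smooth (induced_on (tspace T V) L) (induced_on M Ua) g -> cancel h g ->
  opn M U -> fns M U f -> Ua m -> U m ->
  exists O F, [/\ opn (tspace T V) O, O (chartf h m), fns (tspace T V) O F &
    forall y, Ua y -> U y -> O (chartf h y) -> f y = F (chartf h y)].
Proof.
move=> sg hK oU fUf Uam Um.
have := sg.2 _ _ (@induced_open K M Ua U oU) (@induced_fns K M Ua U f oU fUf).
move=> /(_ (h (exist Ua m Uam))) []; first by rewrite /preimage /= hK.
move=> O [F [oO Ohm fF e]]; exists O, F; split; rewrite ?(chartfE h Uam) //.
move=> y Uay Uy; rewrite (chartfE h Uay) => Ohy.
by have := e (h (exist Ua y Uay)); rewrite /preimage /= hK; apply.
Qed.

Section LinearComponents.
Variables (M : kspace K) (hM : prevariety T M) (W : vectType K) (U : set (car M))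
  (q : car M -> W) (oU : opn M U).
Hypothesis lin_q : forall psi : W -> K, lin_fun psi -> fns M U (fun x => psi (q x)).

Let sM := prevariety_sheaf hM.
Let tM := sheaf_topology sM.

(* Each coordinate of [q] is, near [m], the pullback along a chart of a function on an open subset
   of the model space; reassembling the coordinates factors [q] through the chart. *)
Lemma lin_components_factor m : U m ->
  exists (Ua : set (car M)) (V : vectType K) (L : set V) (h : sig Ua -> sig L)
         (O : set V) (qt : V -> W),
  [/\ opn M Ua, Ua m, smooth (induced_on M Ua) (induced_on (tspace T V) L) h,
      opn (tspace T V) O & O (chartf h m)] /\
  smooth (induced_on (tspace T V) O) (tspace T W) (fun x => qt (proj1_sig x)) /\
  (forall y, Ua y -> U y -> O (chartf h y) -> q y = qt (chartf h y)).
Proof.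
move=> Um; have [Ua [V [L [h [g [[oUa Uam _ sh sg] [hK _]]]]]]] := prevariety_chart hM m.
have tV := taylor_topology hT V.
have /choice[ OF extOF] : forall i, exists OF : set V * (V -> K),
    [/\ opn (tspace T V) OF.1, OF.1 (chartf h m), fns (tspace T V) OF.1 OF.2 &
      forall y, Ua y -> U y -> OF.1 (chartf h y) -> coordv i (q y) = OF.2 (chartf h y)].
  move=> i; have [ O [F ?]] := chart_local_extension sg hK oU (lin_q (coordv_lin i)) Uam Um.
  by exists (O, F).
pose O := \bigcap_i (OF i).1.
have oO : opn (tspace T V) O by apply: topo_bigcap_open => // i; case: (extOF i).
pose qt v := \sum_i (OF i).2 v *: (vbasis {:W})`_i.
exists Ua, V, L, h, O, qt.
split; first by split=> // i _; case: (extOF i).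
split=> [|y Uay Uy Oy].
  apply: taylor_smooth_on => // psi lin_psi.
  have sV := taylor_sheaf hT V.
  apply: (fns_ext sV oO (f := fun v => \sum_(i < \dim {:W}) psi (vbasis {:W})`_i * (OF i).2 v)).
    apply: (fns_sum sV oO (G := fun i v => psi (vbasis {:W})`_i * (OF i).2 v)) => i.
    case: (extOF i) => oOi _ fFi _.
    apply: (fnsZ sV _ oO); apply: (fns_restr sV oOi oO) fFi => v Ov; exact: Ov i I.
  move=> v _; rewrite /qt (lin_fun_sum lin_psi).
  by apply: eq_bigr => i _; rewrite mulrC.
rewrite [LHS]coordv_expand; apply: eq_bigr => i _; congr (_ *: _).
by case: (extOF i) => _ _ _; apply=> //; exact: Oy.
Qed.

Lemma lin_components_open_preimage O : opn (tspace T W) O -> opn M (U `&` q @^-1` O).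
Proof.
move=> oO; apply: (topo_open_nbhs tM) => m [Um Oqm].
have [Ua [V [L [h [Oq [qt [[oUa Uam sh oOq Oqhm] [sqt qE]]]]]]]] := lin_components_factor Um.
have [ O2 [oO2 eO2]] := sqt.1 _ oO.
have O2E v (Oqv : Oq v) : O (qt v) = O2 v := congr1 (fun P => P (exist Oq v Oqv)) eO2.
exists (Ua `&` chartf h @^-1` (Oq `&` O2) `&` U); split.
- apply: topo_openI => //; apply: (chart_open_preimage sM oUa sh).
  exact: (topo_openI (taylor_topology hT V) oOq oO2).
- by split=> //; split=> //; split; rewrite // -O2E // -qE.
- by move=> y [[Uay [Oqy O2y]] Uy]; split; rewrite // /preimage /= qE // O2E.
Qed.

Lemma lin_components_fns_pullback O F : opn (tspace T W) O -> fns (tspace T W) O F ->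
  fns M (U `&` q @^-1` O) (fun x => F (q x)).
Proof.
move=> oO fF; apply: (fns_glue sM (lin_components_open_preimage oO)) => m [Um Oqm].
have [Ua [V [L [h [Oq [qt [[oUa Uam sh oOq Oqhm] [sqt qE]]]]]]]] := lin_components_factor Um.
have [ O2 [oO2 eO2]] := sqt.1 _ oO.
have O2E v (Oqv : Oq v) : O (qt v) = O2 v := congr1 (fun P => P (exist Oq v Oqv)) eO2.
have [ | O5 [F5 [oO5 O5hm fF5 F5E]]] := sqt.2 _ _ oO fF (exist Oq (chartf h m) Oqhm).
  by rewrite /preimage /= -qE.
have tV := taylor_topology hT V.
have oO' : opn (tspace T V) (Oq `&` O2 `&` O5) by apply: topo_openI => //; apply: topo_openI.
have oW := chart_open_preimage sM oUa sh oO'.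
exists (Ua `&` chartf h @^-1` (Oq `&` O2 `&` O5) `&` U); split.
- exact: topo_openI.
- by split=> //; split=> //; split; first split; rewrite // -O2E // -qE.
- by move=> y [[Uay [[Oqy O2y] O5y]] Uy]; split; rewrite // /preimage /= qE // O2E.
have fW := chart_fns_pullback sM oUa sh oO'
  (fns_restr (taylor_sheaf hT V) oO5 oO' (fun v Hv => Hv.2) fF5).
have oWU := topo_openI tM oW oU.
apply: (fns_ext sM oWU (fns_restr sM oW oWU (fun y Hy => Hy.1) fW)) => y [[Uay [[Oqy O2y] O5y]] Uy].
by rewrite qE // (F5E (exist Oq (chartf h y) Oqy)) //= O2E.
Qed.

End LinearComponents.

Lemma nonzero_locus_open (M : kspace K) (hM : prevariety T M) (U : set (car M)) (F : car M -> K) :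
  opn M U -> fns M U F -> opn M (U `&` [set x | F x != 0]).
Proof.
move=> oU fF; have sM := prevariety_sheaf hM.
have lin_F (psi : K^o -> K) : lin_fun psi -> fns M U (fun x => psi (F x)).
  move=> lin_psi; apply: (fns_ext sM oU (fnsZ sM (psi 1) oU fF)) => x _.
  by rewrite mulrC -(lin_funZ lin_psi) /GRing.scale /= mulr1.
have oO : opn (tspace T K^o) (~` [set (0 : K)]).
  have := @taylor_open_lin_preimage K T hT K^o id (~` [set (0 : K)]) (fun a u v => erefl); apply.
  exact/closed_openC/accessible_closed_set1/hausdorff_accessible/norm_hausdorff.
congr (opn M): (lin_components_open_preimage hM oU lin_F oO).
by apply/seteqP; split=> x [Ux /eqP].
Qed.

Lemma locally_closed_prevariety (V : vectType K) (L : set V) :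
  locally_closed (t_opn T V) L -> prevariety T (induced_on (tspace T V) L).
Proof.
move=> lcL; have sL := @induced_sheaf K (tspace T V) L (taylor_sheaf hT V).
split=> //; exists unit, (fun=> 0%N), (fun=> setT); split.
- by move=> [] [].
- by move=> _; exact: topo_openT (sheaf_topology sL).
- by apply/seteqP; split=> x // _; exists tt.
move=> _; exists V, L; split=> //.
exists (@proj1_sig _ _), (fun y => exist setT y I); split.
- exact: smooth_val.
- exact: smooth_corestr (fun=> I) sL (smooth_id _).
- by move=> [x []].
- by [].
Qed.

Lemma locally_closed_setX (V1 V2 : vectType K) (L1 : set V1) (L2 : set V2) :
  locally_closed (t_opn T V1) L1 -> locally_closed (t_opn T V2) L2 ->
  locally_closed (t_opn T (V1 * V2)%type) (L1 `*` L2).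
Proof.
move=> [ O1 [C1 [oO1 cC1 ->]]] [ O2 [C2 [oO2 cC2 ->]]].
have t12 := taylor_topology hT (V1 * V2)%type.
exists (O1 `*` O2), (C1 `*` C2); split.
- by have := topo_openI t12 ((smooth_fst hT V1 V2).1 _ oO1) ((smooth_snd hT V1 V2).1 _ oO2).
- rewrite /closed_in setCI.
  by have := topo_openU t12 ((smooth_fst hT V1 V2).1 _ cC1) ((smooth_snd hT V1 V2).1 _ cC2).
- by apply/seteqP; split=> -[x y] [[? ?] [? ?]].
Qed.

Lemma neq_locus_open (B M : kspace K) (sB : is_sheaf B) (hM : prevariety T M)
    (UB : set (car B)) (oUB : opn B UB) (V : vectType K) (L : set V) (h : sig UB -> sig L)
    (a b : car M -> car B) :
  smooth (induced_on B UB) (induced_on (tspace T V) L) h -> injective h ->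
  smooth M B a -> smooth M B b -> opn M [set m | (UB (a m) /\ UB (b m)) /\ a m <> b m].
Proof.
move=> sh inj_h sa sb; have sM := prevariety_sheaf hM.
pose W := a @^-1` UB `&` b @^-1` UB.
have oW : opn M W := topo_openI (sheaf_topology sM) (sa.1 _ oUB) (sb.1 _ oUB).
pose F i m := coordv i (chartf h (a m)) - coordv i (chartf h (b m)).
have fF i : fns M W (F i).
  have fhi := chart_lin_fns hT sB oUB sh (coordv_lin i).
  apply: (fnsB sM oW (f := fun m => coordv i (chartf h (a m)))
                     (g := fun m => coordv i (chartf h (b m)))).
    by have := fns_restr sM (sa.1 _ oUB) oW (fun m Wm => Wm.1) (sa.2 _ _ oUB fhi).
  by have := fns_restr sM (sb.1 _ oUB) oW (fun m Wm => Wm.2) (sb.2 _ _ oUB fhi).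
suff -> : [set m | (UB (a m) /\ UB (b m)) /\ a m <> b m] = \bigcup_i (W `&` [set m | F i m != 0]).
  by apply: (topo_bigcup_open_in (sheaf_topology sM)) => i _; exact: nonzero_locus_open.
apply/seteqP; split=> m /=.
  move=> [[UBa UBb] neq_ab].
  have [i ?] := coordv_separates (fun e => neq_ab (chartf_inj inj_h UBa UBb e)).
  by exists i.
by move=> [i _ [Wm Fm]]; split=> // eab; move: Fm; rewrite /= /F eab subrr eqxx.
Qed.

Lemma diagonal_closed_in_linear (V : vectType K) (L : set V) o f :
  is_product T (induced_on (tspace T V) L) (induced_on (tspace T V) L) o f ->
  closed_in o (diagK (car (induced_on (tspace T V) L))).
Proof.
move=> [hP sfst ssnd _].
have sL := @induced_sheaf K (tspace T V) L (taylor_sheaf hT V).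
have := neq_locus_open sL hP (topo_openT (sheaf_topology sL))
  (@smooth_val K (induced_on (tspace T V) L) setT) (@sval_inj _ _) sfst ssnd.
by congr o; apply/seteqP; split=> z //= [_ ?].
Qed.

Lemma diagonal_locally_closed (B : kspace K) (hB : prevariety T B) o f :
  is_product T B B o f -> locally_closed o (diagK (car B)).
Proof.
move=> [hP sfst ssnd _]; have sB := prevariety_sheaf hB.
have tP := sheaf_topology (prevariety_sheaf hP).
pose charts := [set Ua : set (car B) | exists (V : vectType K) (L : set V) (h : sig Ua -> sig L),
  [/\ opn B Ua, smooth (induced_on B Ua) (induced_on (tspace T V) L) h & injective h]].
exists (\bigcup_(Ua in charts) [set z | Ua z.1 /\ Ua z.2]),
  (~` \bigcup_(Ua in charts) [set z | (Ua z.1 /\ Ua z.2) /\ z.1 <> z.2]); split.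
- apply: (topo_bigcup_open_in tP) => Ua [V [L [h [oUa _ _]]]].
  by have := topo_openI tP (sfst.1 _ oUa) (ssnd.1 _ oUa).
- rewrite /closed_in setCK; apply: (topo_bigcup_open_in tP) => Ua [V [L [h [oUa sh inj_h]]]].
  by have := neq_locus_open sB hP oUa sh inj_h sfst ssnd.
apply/seteqP; split=> z.
  move=> /= e12; split; last by move=> [Ua _ [_]].
  have [Ua [V [L [h [g [[oUa Uaz _ sh _] [hK _]]]]]]] := prevariety_chart hB z.1.
  by exists Ua; [exists V, L, h; split=> //; exact: can_inj hK|split; rewrite // -e12].
move=> [[Ua chUa Uaz] nN]; apply: contrapT => neq12; apply: nN.
by exists Ua.
Qed.

End Prevariety.

Section ChartInverse.
Variables (K : numFieldType) (T : taylor K) (hT : is_taylor T) (M : kspace K) (Ua : set (car M))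
  (V : vectType K) (L : set V) (h : sig Ua -> sig L) (g : sig L -> sig Ua).
Hypotheses (hK : cancel h g) (gK : cancel g h).

Definition chartinv a (La : L a) : car M := proj1_sig (g (exist L a La)).

Lemma chartinv_irr a (La La' : L a) : chartinv La = chartinv La'.
Proof. by rewrite (Prop_irrelevance La La'). Qed.

Lemma chartinvK y (Uay : Ua y) (Lhy : L (chartf h y)) : chartinv Lhy = y.
Proof.
rewrite /chartinv (_ : exist L _ Lhy = h (exist Ua y Uay)) ?hK //.
by apply: sval_inj; rewrite /= (chartfE h Uay).
Qed.

Lemma chartfK a (La : L a) : chartf h (chartinv La) = a.
Proof.
rewrite /chartinv (chartfE h (proj2_sig (g (exist L a La)))).
by rewrite (_ : exist Ua _ _ = g (exist L a La)) ?gK //; exact: sval_inj.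
Qed.

Lemma smooth_chartinv (V' : vectType K) (Z : set V') (p : V' -> V) (pZ : forall x, Z x -> L (p x)) :
  smooth (induced_on (tspace T V) L) (induced_on M Ua) g ->
  smooth (tspace T V') (tspace T V) p ->
  smooth (induced_on (tspace T V') Z) M (fun z => chartinv (pZ _ (proj2_sig z))).
Proof.
move=> sg sp; have sZ := @induced_sheaf K (tspace T V') Z (taylor_sheaf hT V').
have sq := smooth_corestr (X := induced_on (tspace T V') Z) (Y := tspace T V) (S := L)
  (p := fun z => p (proj1_sig z)) (fun z => pZ _ (proj2_sig z)) sZ
  (@smooth_restr K (tspace T V') (tspace T V) Z p sp).
have := smooth_comp (smooth_comp sq sg) (smooth_val Ua).
by apply.
Qed.

End ChartInverse.

Section FibreProductSpace.
Variables (K : numFieldType) (T : taylor K) (M1 M2 B : kspace K)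
  (phi1 : car M1 -> car B) (phi2 : car M2 -> car B).

Definition fib_pair (M : kspace K) (psi1 : car M -> car M1) (psi2 : car M -> car M2)
    (H : forall x, phi1 (psi1 x) = phi2 (psi2 x)) : car M -> fib_car phi1 phi2 :=
  fun x => exist (fun y : (car M1 * car M2)%type => phi1 y.1 = phi2 y.2) (psi1 x, psi2 x) (H x).

Definition fib_opn : set (set (fib_car phi1 phi2)) := fun A =>
  forall M, prevariety T M -> forall psi1 psi2 (H : forall x, phi1 (psi1 x) = phi2 (psi2 x)),
  smooth M M1 psi1 -> smooth M M2 psi2 -> opn M (fib_pair H @^-1` A).

Definition fib_fns : set (fib_car phi1 phi2) -> set (fib_car phi1 phi2 -> K) := fun A g =>
  forall M, prevariety T M -> forall psi1 psi2 (H : forall x, phi1 (psi1 x) = phi2 (psi2 x)),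
  smooth M M1 psi1 -> smooth M M2 psi2 -> fns M (fib_pair H @^-1` A) (fun x => g (fib_pair H x)).

Definition fib_space : kspace K := @Defs.Space K (fib_car phi1 phi2) fib_opn fib_fns.

Lemma fib_topology : is_topology fib_opn.
Proof.
split=> [M hM *|]; first exact: topo_openT (sheaf_topology (prevariety_sheaf hM)).
split=> [S oS M hM psi1 psi2 H s1 s2|A1 A2 oA1 oA2 M hM psi1 psi2 H s1 s2].
  rewrite preimage_bigcup; apply: (topo_bigcup_open_in (sheaf_topology (prevariety_sheaf hM))).
  by move=> A SA; exact: oS.
by have := topo_openI (sheaf_topology (prevariety_sheaf hM))
  (oA1 M hM _ _ H s1 s2) (oA2 M hM _ _ H s1 s2).
Qed.

Lemma fib_sheaf : is_sheaf fib_space.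
Proof.
split; first exact: fib_topology.
move=> U oU; split.
  move=> f g ff efg M hM psi1 psi2 H s1 s2.
  apply: (fns_ext (prevariety_sheaf hM) (oU M hM _ _ H s1 s2) (ff M hM _ _ H s1 s2)) => x.
  exact: efg.
split=> [c M hM psi1 psi2 H s1 s2|].
  exact: (fns_cst (prevariety_sheaf hM) c (oU M hM _ _ H s1 s2)).
split=> [f g ff fg|].
  split=> M hM psi1 psi2 H s1 s2; have sM := prevariety_sheaf hM.
    exact: (fnsD sM (oU M hM _ _ H s1 s2) (ff M hM _ _ H s1 s2) (fg M hM _ _ H s1 s2)).
  exact: (fnsM sM (oU M hM _ _ H s1 s2) (ff M hM _ _ H s1 s2) (fg M hM _ _ H s1 s2)).
split=> [c f ff M hM psi1 psi2 H s1 s2|].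
  exact: (fnsZ (prevariety_sheaf hM) c (oU M hM _ _ H s1 s2) (ff M hM _ _ H s1 s2)).
split=> [U' oU' U'U f ff M hM psi1 psi2 H s1 s2|f loc M hM psi1 psi2 H s1 s2].
  apply: (fns_restr (prevariety_sheaf hM) (oU M hM _ _ H s1 s2) (oU' M hM _ _ H s1 s2)).
    by move=> x /U'U.
  exact: (ff M hM _ _ H s1 s2).
apply: (fns_glue (prevariety_sheaf hM) (oU M hM _ _ H s1 s2)) => m Um.
have [W [oW [Wm [WU fW]]]] := loc _ Um.
exists (fib_pair H @^-1` W); split; [exact: oW|by []|by move=> x /WU|exact: fW].
Qed.

Lemma smooth_fib_fst : smooth fib_space M1 (fun x => (proj1_sig x).1).
Proof.
by split=> [ O oO M hM psi1 psi2 H [s1 _] _| O g oO fg M hM psi1 psi2 H [_ s1] _]; apply: s1.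
Qed.

Lemma smooth_fib_snd : smooth fib_space M2 (fun x => (proj1_sig x).2).
Proof.
by split=> [ O oO M hM psi1 psi2 H _ [s2 _]| O g oO fg M hM psi1 psi2 H _ [_ s2]]; apply: s2.
Qed.

Lemma smooth_fib_pair (M : kspace K) (hM : prevariety T M) psi1 psi2
    (H : forall x, phi1 (psi1 x) = phi2 (psi2 x)) :
  smooth M M1 psi1 -> smooth M M2 psi2 -> smooth M fib_space (fib_pair H).
Proof. by move=> s1 s2; split=> [A oA|A g oA fg]; [exact: oA|exact: fg]. Qed.

End FibreProductSpace.

Section FibreProductChart.
Variables (K : numFieldType) (T : taylor K) (hT : is_taylor T)
  (M1 M2 B : kspace K) (hM1 : prevariety T M1) (hM2 : prevariety T M2) (hB : prevariety T B)
  (phi1 : car M1 -> car B) (phi2 : car M2 -> car B)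
  (sphi1 : smooth M1 B phi1) (sphi2 : smooth M2 B phi2).
Variables (U1 : set (car M1)) (V1 : vectType K) (L1 : set V1)
  (h1 : sig U1 -> sig L1) (g1 : sig L1 -> sig U1).
Hypotheses (oU1 : opn M1 U1) (lcL1 : locally_closed (t_opn T V1) L1)
  (sh1 : smooth (induced_on M1 U1) (induced_on (tspace T V1) L1) h1)
  (sg1 : smooth (induced_on (tspace T V1) L1) (induced_on M1 U1) g1)
  (hK1 : cancel h1 g1) (gK1 : cancel g1 h1).
Variables (U2 : set (car M2)) (V2 : vectType K) (L2 : set V2)
  (h2 : sig U2 -> sig L2) (g2 : sig L2 -> sig U2).
Hypotheses (oU2 : opn M2 U2) (lcL2 : locally_closed (t_opn T V2) L2)
  (sh2 : smooth (induced_on M2 U2) (induced_on (tspace T V2) L2) h2)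
  (sg2 : smooth (induced_on (tspace T V2) L2) (induced_on M2 U2) g2)
  (hK2 : cancel h2 g2) (gK2 : cancel g2 h2).
Variables (UB : set (car B)) (VB : vectType K) (LB : set VB) (hb : sig UB -> sig LB).
Hypotheses (oUB : opn B UB) (shb : smooth (induced_on B UB) (induced_on (tspace T VB) LB) hb)
  (inj_hb : injective hb).

Definition fib_chart_img : set (V1 * V2)%type := [set ab | exists (La : L1 ab.1) (Lb : L2 ab.2),
  UB (phi1 (chartinv g1 La)) /\ phi1 (chartinv g1 La) = phi2 (chartinv g2 Lb)].

(* Inside [L1 `*` L2] the image is cut out by the open condition of lying over [UB] and by the
   condition that the two points agree in [B], which is closed over the chart of [B]. *)
Lemma fib_chart_img_lc : locally_closed (t_opn T (V1 * V2)%type) fib_chart_img.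
Proof.
pose Y := L1 `*` L2.
have lcY : locally_closed (t_opn T (V1 * V2)%type) Y := locally_closed_setX hT lcL1 lcL2.
have hY := locally_closed_prevariety hT lcY.
pose y1 (y : sig Y) := chartinv g1 (proj2_sig y).1.
pose y2 (y : sig Y) := chartinv g2 (proj2_sig y).2.
have sa : smooth (induced_on (tspace T (V1 * V2)%type) Y) B (fun y => phi1 (y1 y)).
  have := smooth_chartinv hT (fun ab (Yab : Y ab) => Yab.1) sg1 (smooth_fst hT V1 V2).
  by move/smooth_comp; apply.
have sb : smooth (induced_on (tspace T (V1 * V2)%type) Y) B (fun y => phi2 (y2 y)).
  have := smooth_chartinv hT (fun ab (Yab : Y ab) => Yab.2) sg2 (smooth_snd hT V1 V2).
  by move/smooth_comp; apply.
have [ OQ [oOQ eQ]] := topo_openI (sheaf_topology (prevariety_sheaf hY)) (sa.1 _ oUB) (sb.1 _ oUB).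
have [ OE [oOE eE]] := neq_locus_open hT (prevariety_sheaf hB) hY oUB shb inj_hb sa sb.
suff -> : fib_chart_img = Y `&` OQ `&` ~` OE.
  by have := locally_closed_setID (taylor_topology hT _) lcY oOQ oOE.
have QE ab (Yab : Y ab) :
    UB (phi1 (y1 (exist Y ab Yab))) /\ UB (phi2 (y2 (exist Y ab Yab))) <-> OQ ab.
  by rewrite -(congr1 (fun P => P (exist Y ab Yab)) eQ).
have EE ab (Yab : Y ab) : (UB (phi1 (y1 (exist Y ab Yab))) /\ UB (phi2 (y2 (exist Y ab Yab)))) /\
    phi1 (y1 (exist Y ab Yab)) <> phi2 (y2 (exist Y ab Yab)) <-> OE ab.
  by rewrite -(congr1 (fun P => P (exist Y ab Yab)) eE).
apply/seteqP; split=> ab.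
  move=> [La [Lb [UBa eab]]]; have Yab : Y ab := conj La Lb.
  have e1 : y1 (exist Y ab Yab) = chartinv g1 La by apply: chartinv_irr.
  have e2 : y2 (exist Y ab Yab) = chartinv g2 Lb by apply: chartinv_irr.
  split; first by split=> //; apply/QE; rewrite e1 e2 -eab.
  by move=> /EE[_]; apply; rewrite e1 e2.
move=> [[Yab OQab] nOEab]; exists Yab.1, Yab.2.
have [UBa _] := (QE ab Yab).2 OQab; split=> //.
by apply: contrapT => neq; apply: nOEab; apply/(EE ab Yab); split; first exact/QE.
Qed.

Let P := fib_space T phi1 phi2.

Definition fib_chart_dom : set (fib_car phi1 phi2) :=
  [set z | U1 (proj1_sig z).1 /\ U2 (proj1_sig z).2 /\ UB (phi1 (proj1_sig z).1)].

Definition fib_chartf (z : fib_car phi1 phi2) : (V1 * V2)%type :=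
  (chartf h1 (proj1_sig z).1, chartf h2 (proj1_sig z).2).

Section TestMaps.
Variables (M : kspace K) (hM : prevariety T M) (psi1 : car M -> car M1) (psi2 : car M -> car M2)
  (H : forall x, phi1 (psi1 x) = phi2 (psi2 x)).
Hypotheses (s1 : smooth M M1 psi1) (s2 : smooth M M2 psi2).

Lemma fib_chart_dom_preimage_open : opn M (fib_pair H @^-1` fib_chart_dom).
Proof.
have tM := sheaf_topology (prevariety_sheaf hM).
apply: (topo_openI tM (s1.1 _ oU1)); apply: (topo_openI tM (s2.1 _ oU2)).
exact: (smooth_comp s1 sphi1).1 _ oUB.
Qed.

Lemma fib_chartf_lin_fns (chi : V1 * V2 -> K) : lin_fun chi ->
  fns M (fib_pair H @^-1` fib_chart_dom) (fun m => chi (fib_chartf (fib_pair H m))).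
Proof.
move=> /lin_fun_pair[lin1 lin2 chiE]; have sM := prevariety_sheaf hM.
have oD := fib_chart_dom_preimage_open.
have f1 := chart_lin_fns hT (prevariety_sheaf hM1) oU1 sh1 lin1.
have f2 := chart_lin_fns hT (prevariety_sheaf hM2) oU2 sh2 lin2.
have fD1 := fns_restr sM (s1.1 _ oU1) oD (fun m Dm => Dm.1) (s1.2 _ _ oU1 f1).
have fD2 := fns_restr sM (s2.1 _ oU2) oD (fun m Dm => Dm.2.1) (s2.2 _ _ oU2 f2).
by apply: (fns_ext sM oD (fnsD sM oD fD1 fD2)) => m _; rewrite [RHS]chiE.
Qed.

End TestMaps.

Lemma fib_chart_dom_open : opn P fib_chart_dom.
Proof. by move=> M hM psi1 psi2 H s1 s2; exact: fib_chart_dom_preimage_open. Qed.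

Lemma smooth_fib_chartf :
  smooth (induced_on P fib_chart_dom) (tspace T (V1 * V2)%type) (fun d => fib_chartf (proj1_sig d)).
Proof.
have oA O : opn (tspace T (V1 * V2)%type) O -> opn P (fib_chart_dom `&` fib_chartf @^-1` O).
  move=> oO M hM psi1 psi2 H s1 s2.
  by have := lin_components_open_preimage hT hM (fib_chart_dom_preimage_open hM H s1 s2)
    (fib_chartf_lin_fns hM H s1 s2) oO.
have AE O : (fun d : sig fib_chart_dom => (fib_chart_dom `&` fib_chartf @^-1` O) (proj1_sig d)) =
    (fun d => fib_chartf (proj1_sig d)) @^-1` O.
  by apply/funext => -[z Dz]; apply/propext; split=> [[]|].
split=> [ O oO| O F oO fF].
  by exists (fib_chart_dom `&` fib_chartf @^-1` O); rewrite AE; split=> //; exact: oA.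
have fA : fns P (fib_chart_dom `&` fib_chartf @^-1` O) (fun z => F (fib_chartf z)).
  move=> M hM psi1 psi2 H s1 s2.
  by have := lin_components_fns_pullback hT hM (fib_chart_dom_preimage_open hM H s1 s2)
    (fib_chartf_lin_fns hM H s1 s2) oO fF.
by apply: fns_congr (@induced_fns K P fib_chart_dom _ _ (oA _ oO) fA).
Qed.

Lemma fib_chartf_img (d : sig fib_chart_dom) : fib_chart_img (fib_chartf (proj1_sig d)).
Proof.
case: d => -[[x1 x2] /= e12] [/= U1x [U2x UBx]].
exists (chartf_in h1 U1x), (chartf_in h2 U2x).
by rewrite /= (chartinvK hK1 U1x) (chartinvK hK2 U2x).
Qed.

Definition fib_chart (d : sig fib_chart_dom) : sig fib_chart_img :=
  exist fib_chart_img (fib_chartf (proj1_sig d)) (fib_chartf_img d).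

Lemma smooth_fib_chart :
  smooth (induced_on P fib_chart_dom) (induced_on (tspace T (V1 * V2)%type) fib_chart_img)
    fib_chart.
Proof.
exact: (smooth_corestr (X := induced_on P fib_chart_dom) (Y := tspace T (V1 * V2)%type)
  (S := fib_chart_img) (p := fun d => fib_chartf (proj1_sig d)) fib_chartf_img
  (@induced_sheaf K P fib_chart_dom (fib_sheaf T phi1 phi2)) smooth_fib_chartf).
Qed.

Lemma fib_chart_img1 ab : fib_chart_img ab -> L1 ab.1. Proof. by case. Qed.
Lemma fib_chart_img2 ab : fib_chart_img ab -> L2 ab.2. Proof. by case=> La []. Qed.

Definition fib_chart_inv1 (s : sig fib_chart_img) : car M1 :=
  chartinv g1 (fib_chart_img1 (proj2_sig s)).
Definition fib_chart_inv2 (s : sig fib_chart_img) : car M2 :=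
  chartinv g2 (fib_chart_img2 (proj2_sig s)).

Lemma fib_chart_inv_over s : phi1 (fib_chart_inv1 s) = phi2 (fib_chart_inv2 s).
Proof.
have [La [Lb [_ eab]]] := proj2_sig s.
by rewrite /fib_chart_inv1 /fib_chart_inv2 (chartinv_irr _ _ La) (chartinv_irr _ _ Lb).
Qed.

Let fib_chart_invp :=
  fib_pair (M := induced_on (tspace T (V1 * V2)%type) fib_chart_img) fib_chart_inv_over.

Lemma fib_chart_inv_dom s : fib_chart_dom (fib_chart_invp s).
Proof.
have [La [Lb [UBa _]]] := proj2_sig s.
split; first exact: proj2_sig.
by split; [exact: proj2_sig|rewrite /= /fib_chart_inv1 (chartinv_irr _ _ La)].
Qed.

Definition fib_chart_inv (s : sig fib_chart_img) : sig fib_chart_dom :=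
  exist fib_chart_dom (fib_chart_invp s) (fib_chart_inv_dom s).

Lemma smooth_fib_chart_inv :
  smooth (induced_on (tspace T (V1 * V2)%type) fib_chart_img) (induced_on P fib_chart_dom)
    fib_chart_inv.
Proof.
have hS := locally_closed_prevariety hT fib_chart_img_lc.
have s1 := smooth_chartinv hT fib_chart_img1 sg1 (smooth_fst hT V1 V2).
have s2 := smooth_chartinv hT fib_chart_img2 sg2 (smooth_snd hT V1 V2).
exact: (smooth_corestr fib_chart_inv_dom (prevariety_sheaf hS)
  (smooth_fib_pair hS fib_chart_inv_over s1 s2)).
Qed.

Lemma fib_chartK : cancel fib_chart fib_chart_inv.
Proof.
move=> [[x e12] Dx]; have [/= U1x [U2x _]] := Dx; do 2!apply: sval_inj => /=.
rewrite /fib_chart_inv1 /fib_chart_inv2 /=.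
by rewrite (chartinvK hK1 U1x) (chartinvK hK2 U2x) -surjective_pairing.
Qed.

Lemma fib_chart_invK : cancel fib_chart_inv fib_chart.
Proof.
move=> [ab Sab]; apply: sval_inj.
rewrite /= /fib_chartf /= /fib_chart_inv1 /fib_chart_inv2.
by rewrite !(chartfK gK1, chartfK gK2) -surjective_pairing.
Qed.

Lemma fib_chart_iso : exists (V : vectType K) (L : set V),
  locally_closed (t_opn T V) L /\ iso (induced_on P fib_chart_dom) (induced_on (tspace T V) L).
Proof.
exists (V1 * V2)%type, fib_chart_img; split; first exact: fib_chart_img_lc.
exists fib_chart, fib_chart_inv; split.
- exact: smooth_fib_chart.
- exact: smooth_fib_chart_inv.
- exact: fib_chartK.
- exact: fib_chart_invK.
Qed.

End FibreProductChart.

Section FibreProduct.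
Variables (K : numFieldType) (T : taylor K) (hT : is_taylor T)
  (M1 M2 B : kspace K) (hM1 : prevariety T M1) (hM2 : prevariety T M2) (hB : prevariety T B)
  (phi1 : car M1 -> car B) (phi2 : car M2 -> car B)
  (sphi1 : smooth M1 B phi1) (sphi2 : smooth M2 B phi2).

Lemma fib_prevariety : prevariety T (fib_space T phi1 phi2).
Proof.
split; first exact: fib_sheaf.
have [_ [I1 [e1 [C1 [inj_e1 oC1 covC1 chC1]]]]] := hM1.
have [_ [I2 [e2 [C2 [inj_e2 oC2 covC2 chC2]]]]] := hM2.
have [_ [IB [eB [CB [inj_eB oCB covCB chCB]]]]] := hB.
exists (I1 * I2 * IB)%type, (fun i => pickle (e1 i.1.1, e2 i.1.2, eB i.2)),
  (fun i => fib_chart_dom (phi1 := phi1) (phi2 := phi2) (C1 i.1.1) (C2 i.1.2) (CB i.2)); split.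
- by move=> [[? ?] ?] [[? ?] ?] /(pcan_inj pickleK) [/inj_e1 -> /inj_e2 -> /inj_eB ->].
- by move=> [[i1 i2] iB]; have := fib_chart_dom_open (T := T) sphi1 (oC1 i1) (oC2 i2) (oCB iB).
- apply/seteqP; split=> // z _.
  have [i1 _ C1z] : (\bigcup_i C1 i) (proj1_sig z).1 by rewrite covC1.
  have [i2 _ C2z] : (\bigcup_i C2 i) (proj1_sig z).2 by rewrite covC2.
  have [iB _ CBz] : (\bigcup_i CB i) (phi1 (proj1_sig z).1) by rewrite covCB.
  by exists (i1, i2, iB).
move=> [[i1 i2] iB].
have [V1 [L1 [lcL1 [h1 [g1 [sh1 sg1 hK1 gK1]]]]]] := chC1 i1.
have [V2 [L2 [lcL2 [h2 [g2 [sh2 sg2 hK2 gK2]]]]]] := chC2 i2.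
have [VB [LB [_ [hb [gb [shb _ hKb _]]]]]] := chCB iB.
by have := fib_chart_iso hT hM1 hM2 hB sphi1 sphi2 (oC1 i1) lcL1 sh1 sg1 hK1 gK1
  (oC2 i2) lcL2 sh2 sg2 hK2 gK2 (oCB iB) shb (can_inj hKb).
Qed.

Lemma fibre_product_exists : exists o f, is_fibre_product T phi1 phi2 o f.
Proof.
exists (fib_opn T (phi1 := phi1) (phi2 := phi2)), (fib_fns T (phi1 := phi1) (phi2 := phi2)); split.
- exact: fib_prevariety.
- exact: smooth_fib_fst.
- exact: smooth_fib_snd.
- by move=> M hM psi1 psi2 H; exact: smooth_fib_pair.
Qed.

End FibreProduct.

Theorem lemma3p6p14 (R : realType) (b : bool)
  (T : taylor (Kfield R b)) (hT : is_taylor T)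
  (M1 M2 B : kspace (Kfield R b))
  (hM1 : prevariety T M1) (hM2 : prevariety T M2) (hB : prevariety T B)
  (phi1 : car M1 -> car B) (phi2 : car M2 -> car B)
  (hphi1 : smooth M1 B phi1) (hphi2 : smooth M2 B phi2) :
  (forall o f, is_product T B B o f -> locally_closed o (diagK (car B))) /\
  (forall (V : vectType (Kfield R b)) (L : set V),
     locally_closed (t_opn T V) L ->
     forall o f, is_product T (induced_on (tspace T V) L) (induced_on (tspace T V) L) o f ->
       closed_in o (diagK (car (induced_on (tspace T V) L)))) /\
  (exists o f, is_fibre_product T phi1 phi2 o f).
Proof.
split; first by move=> o f; exact: diagonal_locally_closed.
split; first by move=> V L _ o f; exact: diagonal_closed_in_linear.
exact: fibre_product_exists.
Qed.
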